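(* Let $H$ be a $k$-linear Hopf category whose antipode maps $S_{xy}$ are all bijective, let $A$ be a right $H$-comodule category and $B=A^{{\rm co}H}$. Then all maps ${\rm can}'^{y}_{zx}$ ($x,y,z\in X$) are bijective if and only if all maps ${\rm can}^z_{xy}$ ($x,y,z\in X$) are bijective; i.e. $A$ is an $H$-Galois' category extension of $B$ if and only if it is an $H$-Galois category extension of $B$.
   Context: Let $k$ be a commutative ring; unadorned $\otimes$ is over $k$. A $k$-linear category $A$ with class of objects $X$ consists of $k$-modules $A_{xy}$, associative compositions $A_{xy}\otimes A_{yz}\to A_{xz}$, $a\otimes b\mapsto ab$, and units $1_x\in A_{xx}$. A $k$-linear semi-Hopf category $H$ (objects $X$) is a $k$-linear category in which each $H_{xy}$ is a $k$-coalgebra with $\Delta_{xy}(h)=h_{(1)}\otimes h_{(2)}$ and counit $\varepsilon_{xy}$, such that $\Delta_{xz}(hh')=h_{(1)}h'_{(1)}\otimes h_{(2)}h'_{(2)}$, $\Delta_{xx}(1_x)=1_x\otimes1_x$, $\varepsilon_{xz}(hh')=\varepsilon_{xy}(h)\varepsilon_{yz}(h')$, $\varepsilon_{xx}(1_x)=1$. It is a Hopf category if there are $k$-linear maps $S_{xy}:H_{xy}\to H_{yx}$ with $h_{(1)}S_{xy}(h_{(2)})=\varepsilon_{xy}(h)1_x$ and $S_{xy}(h_{(1)})h_{(2)}=\varepsilon_{xy}(h)1_y$. A right $H$-comodule category is a $k$-linear category $A$ with objects $X$ such that each $A_{xy}$ is a right $H_{xy}$-comodule, $\rho_{xy}(a)=a_{[0]}\otimes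 a_{[1]}$, with $\rho_{xz}(ab)=a_{[0]}b_{[0]}\otimes a_{[1]}b_{[1]}$ and $\rho_{xx}(1_x)=1_x\otimes1_x$. Its coinvariants are $B_x=\{a\in A_{xx}\mid\rho_{xx}(a)=a\otimes1_x\}$. The maps are ${\rm can}^z_{xy}:A_{zx}\otimes_{B_x}A_{xy}\to A_{zy}\otimes H_{xy}$, $a\otimes_{B_x}a'\mapsto aa'_{[0]}\otimes a'_{[1]}$, and ${\rm can}'^{y}_{zx}:A_{zx}\otimes_{B_x}A_{xy}\to A_{zy}\otimes H_{zx}$, $a\otimes_{B_x}a'\mapsto a_{[0]}a'\otimes a_{[1]}$. *)

From HB Require Import structures.
From mathcomp Require Import all_boot all_algebra.
Set Implicit Arguments.
Unset Strict Implicit.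
Unset Printing Implicit Defensive.
Import GRing.Theory.
Local Open Scope ring_scope.

Definition klinear (k : comPzRingType) (M N : lmodType k) (f : M -> N) : Prop :=
  forall (a : k) (u v : M), f (a *: u + v) = a *: f u + f v.

Definition kfunctional (k : comPzRingType) (M : lmodType k) (f : M -> k) : Prop :=
  forall (a : k) (u v : M), f (a *: u + v) = a * f u + f v.

Definition kbilinear (k : comPzRingType) (M N W : lmodType k)
  (f : M -> N -> W) : Prop :=
  (forall n, klinear (fun m => f m n)) /\ (forall m, klinear (f m)).

Definition ktrilinear (k : comPzRingType) (M N P W : lmodType k)
  (f : M -> N -> P -> W) : Prop :=
  [/\ forall n p, klinear (fun m => f m n p),
      forall m p, klinear (fun n => f m n p) &
      forall m n, klinear (f m n)].

(* [E m n m' n'] : the relation  m (x) n = m' (x) n'  is imposed *)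
Definition balanced (k : comPzRingType) (M N W : lmodType k)
  (E : M -> N -> M -> N -> Prop) (f : M -> N -> W) : Prop :=
  forall m n m' n', E m n m' n' -> f m n = f m' n'.

(* ---------- tensor products via universal property ----------
   [btensor M N E] is the quotient of M (x)_k N by the relations E, i.e. a
   k-module T with a bilinear E-balanced map [tmul] such that every
   k-bilinear E-balanced map f : M -> N -> W factors uniquely through a
   k-linear map T -> W.  [tlift f] is that factorisation (its value is
   unspecified when f is not bilinear and balanced). *)
Record btensor (k : comPzRingType) (M N : lmodType k)
  (E : M -> N -> M -> N -> Prop) := BTensor {
  tcar : lmodType k;
  tmul : M -> N -> tcar;
  tmul_bil : kbilinear tmul;
  tmul_bal : balanced E tmul;
  tlift : forall W : lmodType k, (M -> N -> W) -> tcar -> W;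
  tlift_lin : forall (W : lmodType k) (f : M -> N -> W),
      kbilinear f -> balanced E f -> klinear (tlift f);
  tlift_tmul : forall (W : lmodType k) (f : M -> N -> W),
      kbilinear f -> balanced E f -> forall m n, tlift f (tmul m n) = f m n;
  tlift_uniq : forall (W : lmodType k) (g : tcar -> W),
      klinear g -> forall t, g t = tlift (fun m n => g (tmul m n)) t
}.

Arguments btensor {k} M N E.

Definition no_rel (M N : Type) : M -> N -> M -> N -> Prop := fun _ _ _ _ => False.

Notation tensor M N := (btensor M N (@no_rel M N)).

Definition is_klinear_cat (k : comPzRingType) (X : Type) (C : X -> X -> lmodType k)
  (mul : forall x y z, C x y -> C y z -> C x z) (one : forall x, C x x) : Prop :=
  [/\ forall x y z, kbilinear (mul x y z),
      forall x y z w (a : C x y) (b : C y z) (c : C z w),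
        mul x z w (mul x y z a b) c = mul x y w a (mul y z w b c),
      forall x y (a : C x y), mul x x y (one x) a = a &
      forall x y (a : C x y), mul x y y a (one y) = a].

(* ---------- semi-Hopf and Hopf categories (Sweedler notation unfolded via
   the universal property of the tensor product) ---------- *)

Definition is_semihopf_cat (k : comPzRingType) (X : Type) (H : X -> X -> lmodType k)
  (hmul : forall x y z, H x y -> H y z -> H x z) (hone : forall x, H x x)
  (TH : forall x y, tensor (H x y) (H x y))
  (Delta : forall x y, H x y -> tcar (TH x y))
  (eps : forall x y, H x y -> k) : Prop :=
  [/\ is_klinear_cat hmul hone,
      [/\ forall x y, klinear (Delta x y),
          forall x y, kfunctional (eps x y),
          (* coassociativity: h(1)(1) (x) h(1)(2) (x) h(2) = h(1) (x) h(2)(1) (x) h(2)(2),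
             tested against every trilinear map *)
          forall x y (h : H x y) (W : lmodType k) (f : H x y -> H x y -> H x y -> W),
            ktrilinear f ->
            tlift (fun u v => tlift (fun a b => f a b v) (Delta x y u)) (Delta x y h)
            = tlift (fun u v => tlift (fun a b => f u a b) (Delta x y v)) (Delta x y h),
          forall x y (h : H x y),
            tlift (fun u v => eps x y u *: v) (Delta x y h) = h &
          forall x y (h : H x y),
            tlift (fun u v => eps x y v *: u) (Delta x y h) = h],
      (* Delta_xz(h h') = h(1) h'(1) (x) h(2) h'(2) *)
      forall x y z (h : H x y) (h' : H y z),
        Delta x z (hmul x y z h h')
        = tlift (fun a b =>
             tlift (fun c d => tmul (TH x z) (hmul x y z a c) (hmul x y z b d))
                   (Delta y z h'))
            (Delta x y h),
      forall x, Delta x x (hone x) = tmul (TH x x) (hone x) (hone x) &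
      [/\ forall x y z (h : H x y) (h' : H y z),
            eps x z (hmul x y z h h') = eps x y h * eps y z h' &
          forall x, eps x x (hone x) = 1]].

Definition is_antipode (k : comPzRingType) (X : Type) (H : X -> X -> lmodType k)
  (hmul : forall x y z, H x y -> H y z -> H x z) (hone : forall x, H x x)
  (TH : forall x y, tensor (H x y) (H x y))
  (Delta : forall x y, H x y -> tcar (TH x y))
  (eps : forall x y, H x y -> k) (S : forall x y, H x y -> H y x) : Prop :=
  [/\ forall x y, klinear (S x y),
      forall x y (h : H x y),
        tlift (fun a b => hmul x y x a (S x y b)) (Delta x y h) = eps x y h *: hone x &
      forall x y (h : H x y),
        tlift (fun a b => hmul y x y (S x y a) b) (Delta x y h) = eps x y h *: hone y].

Definition is_comodule_cat (k : comPzRingType) (X : Type) (H : X -> X -> lmodType k)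
  (hmul : forall x y z, H x y -> H y z -> H x z) (hone : forall x, H x x)
  (TH : forall x y, tensor (H x y) (H x y))
  (Delta : forall x y, H x y -> tcar (TH x y))
  (eps : forall x y, H x y -> k)
  (A : X -> X -> lmodType k)
  (amul : forall x y z, A x y -> A y z -> A x z) (aone : forall x, A x x)
  (TAH : forall x y z w, tensor (A x y) (H z w))
  (rho : forall x y, A x y -> tcar (TAH x y x y)) : Prop :=
  [/\ is_klinear_cat amul aone,
      [/\ forall x y, klinear (rho x y),
          (* a[0][0] (x) a[0][1] (x) a[1] = a[0] (x) a[1](1) (x) a[1](2) *)
          forall x y (a : A x y) (W : lmodType k) (f : A x y -> H x y -> H x y -> W),
            ktrilinear f ->
            tlift (fun u v => tlift (fun c h => f c h v) (rho x y u)) (rho x y a)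
            = tlift (fun u v => tlift (fun g h => f u g h) (Delta x y v)) (rho x y a) &
          forall x y (a : A x y),
            tlift (fun u v => eps x y v *: u) (rho x y a) = a],
      (* rho_xz(a b) = a[0] b[0] (x) a[1] b[1] *)
      forall x y z (a : A x y) (b : A y z),
        rho x z (amul x y z a b)
        = tlift (fun a0 a1 =>
             tlift (fun b0 b1 => tmul (TAH x z x z) (amul x y z a0 b0) (hmul x y z a1 b1))
                   (rho y z b))
            (rho x y a) &
      forall x, rho x x (aone x) = tmul (TAH x x x x) (aone x) (hone x)].

Definition coinv (k : comPzRingType) (X : Type) (H : X -> X -> lmodType k)
  (hone : forall x, H x x) (A : X -> X -> lmodType k)
  (TAH : forall x y z w, tensor (A x y) (H z w))
  (rho : forall x y, A x y -> tcar (TAH x y x y)) (x : X) (b : A x x) : Prop :=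
  rho x x b = tmul (TAH x x x x) b (hone x).

(* relations defining A_zx (x)_{B_x} A_xy :  (m' b) (x) n = m' (x) (b n), b in B_x *)
Definition Bbal (k : comPzRingType) (X : Type) (H : X -> X -> lmodType k)
  (hone : forall x, H x x) (A : X -> X -> lmodType k)
  (amul : forall x y z, A x y -> A y z -> A x z)
  (TAH : forall x y z w, tensor (A x y) (H z w))
  (rho : forall x y, A x y -> tcar (TAH x y x y)) (z x y : X)
  : A z x -> A x y -> A z x -> A x y -> Prop :=
  fun m n m' n' => exists b : A x x,
    [/\ @coinv k X H hone A TAH rho x b, m = amul z x x m' b & n' = amul x x y b n].

(* can^z_{xy} : A_zx (x)_{B_x} A_xy -> A_zy (x) H_xy,  a (x) a' |-> a a'[0] (x) a'[1] *)
Definition can_map (k : comPzRingType) (X : Type) (H : X -> X -> lmodType k)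
  (hone : forall x, H x x) (A : X -> X -> lmodType k)
  (amul : forall x y z, A x y -> A y z -> A x z)
  (TAH : forall x y z w, tensor (A x y) (H z w))
  (rho : forall x y, A x y -> tcar (TAH x y x y))
  (TB : forall z x y, btensor (A z x) (A x y) (@Bbal k X H hone A amul TAH rho z x y))
  (z x y : X) : tcar (TB z x y) -> tcar (TAH z y x y) :=
  tlift (fun (a : A z x) (a' : A x y) =>
    tlift (fun c h => tmul (TAH z y x y) (amul z x y a c) h) (rho x y a')).

(* can'^y_{zx} : A_zx (x)_{B_x} A_xy -> A_zy (x) H_zx,  a (x) a' |-> a[0] a' (x) a[1] *)
Definition can'_map (k : comPzRingType) (X : Type) (H : X -> X -> lmodType k)
  (hone : forall x, H x x) (A : X -> X -> lmodType k)
  (amul : forall x y z, A x y -> A y z -> A x z)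
  (TAH : forall x y z w, tensor (A x y) (H z w))
  (rho : forall x y, A x y -> tcar (TAH x y x y))
  (TB : forall z x y, btensor (A z x) (A x y) (@Bbal k X H hone A amul TAH rho z x y))
  (z x y : X) : tcar (TB z x y) -> tcar (TAH z y z x) :=
  tlift (fun (a : A z x) (a' : A x y) =>
    tlift (fun c h => tmul (TAH z y z x) (amul z x y c a') h) (rho z x a)).

(* The two Galois maps differ by invertible corrections of the H-factor:
   can'(a (x) a') = a[0] a' (x) a[1] is obtained from can(a (x) a') = a a'[0] (x) a'[1]
   by first applying id (x) S, giving a a'[0] (x) S(a'[1]), and then the twist
   b (x) g |-> b[0] (x) b[1] g, since a[0] a'[0] (x) a[1] a'[1] S(a'[2]) = a[0] a' (x) a[1].
   The twist is invertible with inverse b (x) g |-> b[0] (x) S(b[1]) g by the antipode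
   axioms, and id (x) S is bijective because S is; so can' is bijective iff can is. *)

From HB Require Import structures.
From mathcomp Require Import all_boot all_algebra.
From Stdlib Require Import FunctionalExtensionality.
Set Implicit Arguments.
Unset Strict Implicit.
Unset Printing Implicit Defensive.
Import GRing.Theory.
Local Open Scope ring_scope.

Section Linearity.
Variable k : comPzRingType.
Implicit Types M N P U W : lmodType k.

Lemma klinear0 M N (f : M -> N) : klinear f -> f 0 = 0.
Proof.
move=> f_lin; have := f_lin 1 0 0; rewrite !scale1r addr0.
by move=> /(congr1 (fun w => w - f 0)); rewrite addrK subrr.
Qed.

Lemma klinearZ M N (f : M -> N) (a : k) u : klinear f -> f (a *: u) = a *: f u.
Proof. by move=> f_lin; have := f_lin a u 0; rewrite !addr0 klinear0 // addr0. Qed.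

Lemma klinear_id M : klinear (@id M).
Proof. by []. Qed.

Lemma klinear_comp M N P (g : N -> P) (f : M -> N) :
  klinear g -> klinear f -> klinear (fun u => g (f u)).
Proof. by move=> g_lin f_lin a u v; rewrite f_lin g_lin. Qed.

Lemma kbilinear_l M N W (f : M -> N -> W) n : kbilinear f -> klinear (f^~ n).
Proof. by case. Qed.

Lemma kbilinear_r M N W (f : M -> N -> W) m : kbilinear f -> klinear (f m).
Proof. by case. Qed.

Lemma klinear_scaler M N (c : k) (f : M -> N) :
  klinear f -> klinear (fun u => c *: f u).
Proof. by move=> f_lin a u v; rewrite f_lin scalerDr !scalerA mulrC. Qed.

Lemma klinear_scalel M N (e : M -> k) (c : N) :
  kfunctional e -> klinear (fun u => e u *: c).
Proof. by move=> e_lin a u v; rewrite e_lin scalerDl scalerA. Qed.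

Lemma klinear_comb M N (f g : M -> N) (c : k) :
  klinear f -> klinear g -> klinear (fun u => c *: f u + g u).
Proof.
move=> f_lin g_lin a u v; rewrite f_lin g_lin scalerDr !scalerA mulrC -!scalerA.
by rewrite scalerDr addrACA.
Qed.

Lemma klinear_can M N (f : M -> N) (g : N -> M) :
  klinear f -> cancel f g -> cancel g f -> klinear g.
Proof. by move=> f_lin fK gK a u v; apply: (can_inj fK); rewrite f_lin !gK. Qed.

Lemma balanced_no_rel M N W (f : M -> N -> W) : balanced (@no_rel M N) f.
Proof. by move=> ? ? ? ? []. Qed.

Section BalancedTensor.
Variables (M N : lmodType k) (E : M -> N -> M -> N -> Prop) (T : btensor M N E).

Lemma eq_tlift W (f g : M -> N -> W) t :
  (forall m n, f m n = g m n) -> tlift (b:=T) f t = tlift g t.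
Proof.
move=> eq_fg; congr tlift.
by apply: functional_extensionality => m; apply: functional_extensionality.
Qed.

Lemma btensor_ext W (f g : tcar T -> W) :
  klinear f -> klinear g -> (forall m n, f (tmul T m n) = g (tmul T m n)) ->
  forall t, f t = g t.
Proof.
by move=> f_lin g_lin eq_fg t; rewrite (tlift_uniq f_lin) (tlift_uniq g_lin); apply: eq_tlift.
Qed.

Lemma tlift_comp W W' (L : W -> W') (f : M -> N -> W) :
  klinear L -> kbilinear f -> balanced E f ->
  forall t, L (tlift (b:=T) f t) = tlift (fun m n => L (f m n)) t.
Proof.
move=> L_lin [f_linl f_linr] f_bal.
have Lf_bil : kbilinear (fun m n => L (f m n)) by split=> ?; apply: klinear_comp.
have Lf_bal : balanced E (fun m n => L (f m n)) by move=> m n m' n' /f_bal ->.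
apply: btensor_ext; first exact: (klinear_comp L_lin (tlift_lin _ f_bal)).
  exact: tlift_lin.
by move=> m n; rewrite !tlift_tmul.
Qed.

Lemma klinear_tlift_fun U W (F : U -> M -> N -> W) t :
  (forall u, kbilinear (F u)) -> (forall u, balanced E (F u)) ->
  (forall m n, klinear (fun u => F u m n)) -> klinear (fun u => tlift (b:=T) (F u) t).
Proof.
move=> F_bil F_bal F_lin a u v; move: t.
apply: (btensor_ext (f := tlift (F (a *: u + v)))
                    (g := fun t => a *: tlift (F u) t + tlift (F v) t)).
- exact: tlift_lin.
- by apply: klinear_comb; apply: tlift_lin.
- by move=> m n; rewrite !tlift_tmul //; apply: F_lin.
Qed.

Lemma klinear_tlift_arg U W (F : M -> N -> W) (s : U -> tcar T) :
  kbilinear F -> balanced E F -> klinear s -> klinear (fun u => tlift (b:=T) F (s u)).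
Proof. by move=> F_bil F_bal; apply: klinear_comp; apply: tlift_lin. Qed.

End BalancedTensor.
End Linearity.

Ltac solve_balanced := solve [apply: balanced_no_rel | eauto].

Ltac solve_klinear :=
  (* eta-expand, so that the patterns below see a [fun u => _] *)
  lazymatch goal with |- klinear ?g =>
    let g' := eval cbv beta in (fun u => g u) in change (klinear g') end;
  first
  [ solve [eauto using tmul_bil, kbilinear_l, kbilinear_r]
  | match goal with
    | |- klinear (fun u => u) => exact: klinear_id
    | |- klinear (fun u => tlift ?F (@?s u)) =>
        refine (@klinear_tlift_arg _ _ _ _ _ _ _ F s _ _ _);
          [solve_kbilinear | solve_balanced | solve_klinear]
    | |- klinear (fun u => tlift (@?F u) ?t) =>
        refine (@klinear_tlift_fun _ _ _ _ _ _ _ F t _ _ _);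
          [intro; solve_kbilinear | intro; solve_balanced | intros; solve_klinear]
    | |- klinear (fun u => ?c *: (@?f u)) =>
        refine (@klinear_scaler _ _ _ c f _); solve_klinear
    | |- klinear (fun u => (@?e u) *: ?c) =>
        refine (@klinear_scalel _ _ _ e c _); solve [eauto]
    | |- klinear (fun u => ?g (@?f u)) =>
        refine (@klinear_comp _ _ _ _ g f _ _);
          [solve [eauto using tmul_bil, kbilinear_l, kbilinear_r] | solve_klinear]
    | |- klinear (fun u => ?op (@?f u) ?b) =>
        refine (@klinear_comp _ _ _ _ (op^~ b) f _ _);
          [solve [eauto using tmul_bil, kbilinear_l] | solve_klinear]
    end ]
with solve_kbilinear := split; intro; solve_klinear.

Ltac solve_ktrilinear := split; intros; solve_klinear.

Ltac solve_side := solve [solve_kbilinear | solve_balanced | solve_klinear].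

Lemma tlift_swap (k : comPzRingType) (M1 N1 M2 N2 W : lmodType k)
  (T1 : tensor M1 N1) (T2 : tensor M2 N2) (F : M1 -> N1 -> M2 -> N2 -> W) :
  (forall m n, kbilinear (F m n)) -> (forall p q, kbilinear (fun m n => F m n p q)) ->
  forall t s, tlift (b:=T1) (fun m n => tlift (b:=T2) (F m n) s) t
            = tlift (b:=T2) (fun p q => tlift (b:=T1) (fun m n => F m n p q) t) s.
Proof.
move=> F_bil12 F_bil34 t.
have F_lin1 n p q : klinear (fun m => F m n p q) by case: (F_bil34 p q).
have F_lin2 m p q : klinear (fun n => F m n p q) by case: (F_bil34 p q).
apply: btensor_ext; [solve_side | solve_side | move=> p q].
rewrite tlift_tmul; [| solve_side | solve_side].
by apply: eq_tlift => m n; rewrite tlift_tmul //; apply: balanced_no_rel.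
Qed.

Definition tensor_mapr (k : comPzRingType) (M N N' : lmodType k)
    (T : tensor M N) (T' : tensor M N') (f : N -> N') : tcar T -> tcar T' :=
  tlift (fun m n => tmul T' m (f n)).
Arguments tensor_mapr {k M N N'} T T' f _.

Section TensorMapr.
Variables (k : comPzRingType) (M N N' : lmodType k).
Variables (T : tensor M N) (T' : tensor M N').

Lemma tensor_mapr_tmul (f : N -> N') m n :
  klinear f -> tensor_mapr T T' f (tmul T m n) = tmul T' m (f n).
Proof. by move=> f_lin; rewrite /tensor_mapr tlift_tmul //; solve_side. Qed.

Lemma klinear_tensor_mapr (f : N -> N') : klinear f -> klinear (tensor_mapr T T' f).
Proof. by move=> f_lin; rewrite /tensor_mapr; solve_side. Qed.

End TensorMapr.

Lemma tensor_maprK (k : comPzRingType) (M N N' : lmodType k)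
    (T : tensor M N) (T' : tensor M N') (f : N -> N') (g : N' -> N) :
  klinear f -> klinear g -> cancel f g -> cancel (tensor_mapr T T' f) (tensor_mapr T' T g).
Proof.
move=> f_lin g_lin fK; apply: btensor_ext => [||m n].
- by apply: klinear_comp; apply: klinear_tensor_mapr.
- exact: klinear_id.
- by rewrite !tensor_mapr_tmul // fK.
Qed.

Lemma bij_tensor_mapr (k : comPzRingType) (M N N' : lmodType k)
    (T : tensor M N) (T' : tensor M N') (f : N -> N') :
  klinear f -> bijective f -> bijective (tensor_mapr T T' f).
Proof.
move=> f_lin [g fK gK]; have g_lin := klinear_can f_lin fK gK.
by exists (tensor_mapr T' T g); apply: tensor_maprK.
Qed.

Lemma bij_comp_eq (A B C : Type) (u : B -> C) (f : A -> B) (g : A -> C) :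
  bijective u -> g =1 u \o f -> bijective g <-> bijective f.
Proof.
move=> [v uK vK] gE; split=> [g_bij | f_bij].
- apply: (eq_bij (f := v \o g)); first by apply: bij_comp => //; exists u.
  by move=> a; rewrite /= gE /= uK.
- by apply: (eq_bij (f := u \o f)); [apply: bij_comp => //; exists v | move=> a; rewrite gE].
Qed.

Section ComoduleCategory.
Unset Implicit Arguments.
Variables (k : comPzRingType) (X : Type) (H : X -> X -> lmodType k).
Variables (hmul : forall x y z, H x y -> H y z -> H x z) (hone : forall x, H x x).
Variables (TH : forall x y, tensor (H x y) (H x y)) (Delta : forall x y, H x y -> tcar (TH x y)).
Variables (eps : forall x y, H x y -> k) (S : forall x y, H x y -> H y x).
Variables (A : X -> X -> lmodType k) (amul : forall x y z, A x y -> A y z -> A x z).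
Variables (aone : forall x, A x x) (TAH : forall x y z w, tensor (A x y) (H z w)).
Variable (rho : forall x y, A x y -> tcar (TAH x y x y)).
Variable TB : forall z x y, btensor (A z x) (A x y) (@Bbal k X H hone A amul TAH rho z x y).
Set Implicit Arguments.
Hypothesis HH : is_semihopf_cat hmul hone Delta eps.
Hypothesis HS : is_antipode hmul hone Delta eps S.
Hypothesis HA : is_comodule_cat hmul hone Delta eps amul aone rho.

Lemma hmul_kbilinear x y z : kbilinear (hmul x y z).
Proof. by case: HH => [[]]. Qed.

Lemma hmulA x y z w (a : H x y) (b : H y z) (c : H z w) :
  hmul x z w (hmul x y z a b) c = hmul x y w a (hmul y z w b c).
Proof. by case: HH => [[]]. Qed.

Lemma hmul1h x y (h : H x y) : hmul x x y (hone x) h = h.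
Proof. by case: HH => [[]]. Qed.

Lemma hmulh1 x y (h : H x y) : hmul x y y h (hone y) = h.
Proof. by case: HH => [[]]. Qed.

Lemma eps_kfunctional x y : kfunctional (eps x y).
Proof. by case: HH => _ []. Qed.

Lemma S_klinear x y : klinear (S x y).
Proof. by case: HS. Qed.

Lemma antipode_r x y (h : H x y) :
  tlift (fun a b => hmul x y x a (S x y b)) (Delta x y h) = eps x y h *: hone x.
Proof. by case: HS. Qed.

Lemma antipode_l x y (h : H x y) :
  tlift (fun a b => hmul y x y (S x y a) b) (Delta x y h) = eps x y h *: hone y.
Proof. by case: HS. Qed.

Lemma amul_kbilinear x y z : kbilinear (amul x y z).
Proof. by case: HA => [[]]. Qed.

Lemma amulA x y z w (a : A x y) (b : A y z) (c : A z w) :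
  amul x z w (amul x y z a b) c = amul x y w a (amul y z w b c).
Proof. by case: HA => [[]]. Qed.

Lemma rho_klinear x y : klinear (rho x y).
Proof. by case: HA => _ []. Qed.

Lemma rho_coassoc x y (a : A x y) (W : lmodType k) (f : A x y -> H x y -> H x y -> W) :
  ktrilinear f ->
  tlift (fun u v => tlift (fun c h => f c h v) (rho x y u)) (rho x y a)
  = tlift (fun u v => tlift (fun g h => f u g h) (Delta x y v)) (rho x y a).
Proof. by case: HA => _ [_ coassoc _] _ _ /coassoc. Qed.

Lemma rho_counit x y (a : A x y) : tlift (fun u v => eps x y v *: u) (rho x y a) = a.
Proof. by case: HA => _ []. Qed.

Lemma rho_amul x y z (a : A x y) (b : A y z) :
  rho x z (amul x y z a b)
  = tlift (fun a0 a1 =>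
      tlift (fun b0 b1 => tmul (TAH x z x z) (amul x y z a0 b0) (hmul x y z a1 b1))
            (rho y z b))
      (rho x y a).
Proof. by case: HA. Qed.

Local Hint Resolve hmul_kbilinear eps_kfunctional S_klinear amul_kbilinear rho_klinear : core.

Lemma rho_convolution_unit x y w (W : lmodType k) (F : H x y -> H x y -> H w w)
  (G : A x y -> H w w -> W) (b : A x y) :
  kbilinear F -> kbilinear G -> (forall h, tlift F (Delta x y h) = eps x y h *: hone w) ->
  tlift (fun c h => tlift (fun d h' => G d (F h' h)) (rho x y c)) (rho x y b) = G b (hone w).
Proof.
move=> F_bil G_bil FE.
rewrite (@rho_coassoc _ _ b _ (fun d h' h => G d (F h' h))); last by solve_ktrilinear.
transitivity (tlift (fun c h => G (eps x y h *: c) (hone w)) (rho x y b)).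
  apply: eq_tlift => c h; rewrite -(tlift_comp (L := G c) (f := F)); try solve_side.
  by rewrite FE (klinearZ _ _ (kbilinear_r c G_bil)) (klinearZ _ _ (kbilinear_l _ G_bil)).
rewrite -(tlift_comp (L := G^~ (hone w)) (f := fun c h => eps x y h *: c)) ?rho_counit //.
all: solve_side.
Qed.

Definition coact_twist x y z : tcar (TAH x y y z) -> tcar (TAH x y x z) :=
  tlift (fun b g => tlift (fun c h => tmul (TAH x y x z) c (hmul x y z h g)) (rho x y b)).
Arguments coact_twist : clear implicits.

Definition coact_untwist x y z : tcar (TAH x y x z) -> tcar (TAH x y y z) :=
  tlift (fun b g => tlift (fun c h => tmul (TAH x y y z) c (hmul y x z (S x y h) g)) (rho x y b)).
Arguments coact_untwist : clear implicits.

Lemma coact_twist_tmul x y z b g :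
  coact_twist x y z (tmul _ b g)
  = tlift (fun c h => tmul (TAH x y x z) c (hmul x y z h g)) (rho x y b).
Proof. by rewrite /coact_twist tlift_tmul //; solve_side. Qed.

Lemma coact_untwist_tmul x y z b g :
  coact_untwist x y z (tmul _ b g)
  = tlift (fun c h => tmul (TAH x y y z) c (hmul y x z (S x y h) g)) (rho x y b).
Proof. by rewrite /coact_untwist tlift_tmul //; solve_side. Qed.

Lemma klinear_coact_twist x y z : klinear (coact_twist x y z).
Proof. by rewrite /coact_twist; solve_side. Qed.

Lemma klinear_coact_untwist x y z : klinear (coact_untwist x y z).
Proof. by rewrite /coact_untwist; solve_side. Qed.

Local Hint Resolve klinear_coact_twist klinear_coact_untwist : core.

Lemma coact_untwistK x y z : cancel (coact_untwist x y z) (coact_twist x y z).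
Proof.
apply: btensor_ext => [||b g]; try solve_side.
rewrite coact_untwist_tmul tlift_comp; try solve_side.
under eq_tlift => c h do rewrite coact_twist_tmul.
under eq_tlift => c h do under eq_tlift => d h' do rewrite -hmulA.
rewrite (rho_convolution_unit (G := fun d u => tmul _ d (hmul x x z u g))) ?hmul1h //.
all: by [solve_side | exact: antipode_r].
Qed.

Lemma coact_twistK x y z : cancel (coact_twist x y z) (coact_untwist x y z).
Proof.
apply: btensor_ext => [||b g]; try solve_side.
rewrite coact_twist_tmul tlift_comp; try solve_side.
under eq_tlift => c h do rewrite coact_untwist_tmul.
under eq_tlift => c h do under eq_tlift => d h' do rewrite -hmulA.
rewrite (rho_convolution_unit (G := fun d u => tmul _ d (hmul y y z u g))) ?hmul1h //.
all: by [solve_side | exact: antipode_l].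
Qed.

Lemma bij_coact_twist x y z : bijective (coact_twist x y z).
Proof. by exists (coact_untwist x y z); [apply: coact_twistK | apply: coact_untwistK]. Qed.

Local Notation Brel z x y := (@Bbal k X H hone A amul TAH rho z x y).
Local Notation can z x y := (@can_map k X H hone A amul TAH rho TB z x y).
Local Notation can' z x y := (@can'_map k X H hone A amul TAH rho TB z x y).

Lemma can_form_balanced z x y : balanced (Brel z x y)
  (fun a a' => tlift (fun c h => tmul (TAH z y x y) (amul z x y a c) h) (rho x y a')).
Proof.
move=> _ n m' _ [b [b_coinv -> ->]].
rewrite rho_amul b_coinv tlift_tmul; try solve_side.
rewrite tlift_comp; try solve_side.
by apply: eq_tlift => n0 n1; rewrite tlift_tmul ?hmul1h ?amulA; try solve_side.
Qed.

Lemma can'_form_balanced z x y : balanced (Brel z x y)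
  (fun a a' => tlift (fun c h => tmul (TAH z y z x) (amul z x y c a') h) (rho z x a)).
Proof.
move=> _ n m' _ [b [b_coinv -> ->]].
rewrite rho_amul b_coinv tlift_comp; try solve_side.
apply: eq_tlift => m0 m1.
by rewrite !tlift_tmul ?hmulh1 ?amulA; try solve_side.
Qed.

Local Hint Resolve can_form_balanced can'_form_balanced : core.

Lemma can_map_tmul z x y a a' :
  can z x y (tmul (TB z x y) a a')
  = tlift (fun c h => tmul (TAH z y x y) (amul z x y a c) h) (rho x y a').
Proof. by rewrite /can_map tlift_tmul //; solve_side. Qed.

Lemma can'_map_tmul z x y a a' :
  can' z x y (tmul (TB z x y) a a')
  = tlift (fun c h => tmul (TAH z y z x) (amul z x y c a') h) (rho z x a).
Proof. by rewrite /can'_map tlift_tmul //; solve_side. Qed.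

Lemma klinear_can_map z x y : klinear (can z x y).
Proof. by apply: tlift_lin => //; solve_side. Qed.

Lemma klinear_can'_map z x y : klinear (can' z x y).
Proof. by apply: tlift_lin => //; solve_side. Qed.

Local Hint Resolve klinear_can_map klinear_can'_map klinear_tensor_mapr : core.

Lemma can'_map_factor z x y t :
  can' z x y t
  = coact_twist z y x (tensor_mapr _ (TAH z y y x) (S x y) (can z x y t)).
Proof.
move: t; apply: btensor_ext => [||a a']; try solve_side.
rewrite can'_map_tmul can_map_tmul (tlift_comp (L := tensor_mapr _ _ _)); try solve_side.
rewrite (tlift_comp (L := coact_twist z y x)); try solve_side.
transitivity (tlift (fun c h => tlift (fun a0 a1 => tlift (fun c0 c1 =>
    tmul (TAH z y z x) (amul z x y a0 c0) (hmul z x x a1 (hmul x y x c1 (S x y h))))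
      (rho x y c)) (rho z x a)) (rho x y a')); last first.
  apply: eq_tlift => c h.
  rewrite tensor_mapr_tmul // coact_twist_tmul rho_amul tlift_comp; try solve_side.
  apply: eq_tlift => a0 a1; rewrite tlift_comp; try solve_side.
  by apply: eq_tlift => c0 c1; rewrite tlift_tmul ?hmulA; try solve_side.
rewrite tlift_swap; try by move=> *; solve_side.
apply: eq_tlift => a0 a1.
rewrite (rho_convolution_unit (G := fun d u => tmul _ (amul z x y a0 d) (hmul z x x a1 u))).
rewrite ?hmulh1 //.
all: by [solve_side | exact: antipode_r].
Qed.

End ComoduleCategory.

Theorem theorem3p14
  (k : comPzRingType) (X : Type)
  (H : X -> X -> lmodType k)
  (hmul : forall x y z, H x y -> H y z -> H x z) (hone : forall x, H x x)
  (TH : forall x y, tensor (H x y) (H x y))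
  (Delta : forall x y, H x y -> tcar (TH x y))
  (eps : forall x y, H x y -> k)
  (S : forall x y, H x y -> H y x)
  (HH : @is_semihopf_cat k X H hmul hone TH Delta eps)
  (HS : @is_antipode k X H hmul hone TH Delta eps S)
  (Sbij : forall x y, bijective (S x y))
  (A : X -> X -> lmodType k)
  (amul : forall x y z, A x y -> A y z -> A x z) (aone : forall x, A x x)
  (TAH : forall x y z w, tensor (A x y) (H z w))
  (rho : forall x y, A x y -> tcar (TAH x y x y))
  (HA : @is_comodule_cat k X H hmul hone TH Delta eps A amul aone TAH rho)
  (TB : forall z x y, btensor (A z x) (A x y) (@Bbal k X H hone A amul TAH rho z x y)) :
  (forall x y z, bijective (@can'_map k X H hone A amul TAH rho TB z x y)) <->
  (forall x y z, bijective (@can_map k X H hone A amul TAH rho TB z x y)).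
Proof.
split=> bij x y z.
all: have [can_of_can' can'_of_can] := bij_comp_eq
  (bij_comp (bij_coact_twist HH HS HA z y x)
            (bij_tensor_mapr _ (TAH z y y x) (S_klinear HS (x:=x) (y:=y)) (Sbij x y)))
  (can'_map_factor (TB := TB) HH HS HA (z:=z) (x:=x) (y:=y)).
- exact: can_of_can' (bij x y z).
- exact: can'_of_can (bij x y z).
Qed.
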